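(* Let $V$ be a nonempty finite set and let $B \subseteq \mathbb{Z}^V$ be a nonempty set satisfying ($\Delta$-EXC): for any $p, q \in B$ and any $u \in \operatorname{supp}(q-p)$, there exists $\alpha \in \Phi_B(p,q)$ with $u \in \operatorname{supp}(\alpha)$. Let $q, r \in B$ with $q \neq r$. Then there exist $k, l \ge 1$ and vectors $\alpha_1, \dots, \alpha_k \in \Phi_B(q,r)$ and $\beta_1, \dots, \beta_l \in \Phi_B(r,q)$ (not necessarily distinct) such that $\sum_{i=1}^k \alpha_i + \sum_{j=1}^l \beta_j = \mathbf{0}$.
   Context: For $t \in \mathbb{R}^V$, $\operatorname{supp}(t) = \{u \in V : t(u) \neq 0\}$; $\|p\|_1 = \sum_{u \in V}|p(u)|$; $\chi_u$ is the $u$-th unit vector. Let $\Phi = \{\pm \chi_u : u \in V\} \cup \{\pm\chi_u \pm \chi_v : u, v \in V, u \ne v\}$. For $p, q \in \mathbb{Z}^V$, $\Phi(p,q) = \{\alpha \in \Phi : \|q - (p+\alpha)\|_1 = \|q-p\|_1 - \|\alpha\|_1\}$, and for $B \subseteq \mathbb{Z}^V$ and $p,q \in B$, $\Phi_B(p,q) = \{\alpha \in \Phi(p,q) : p + \alpha \in B\}$. *)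

From mathcomp Require Import all_boot all_order all_algebra.
Set Implicit Arguments. Unset Strict Implicit. Unset Printing Implicit Defensive.
Import Order.TTheory GRing.Theory Num.Theory.
Local Open Scope ring_scope.

Notation vec V := {ffun V -> int}.

Definition supp (V : finType) (t : vec V) : {set V} := [set u | t u != 0].

Definition norm1 (V : finType) (p : vec V) : int := \sum_(u : V) `|p u|.

Definition chi (V : finType) (u : V) : vec V := [ffun w => (w == u)%:Z].

Definition sgn (b : bool) : int := if b then 1 else -1.

Definition inPhi (V : finType) (a : vec V) : Prop :=
  (exists (u : V) (s : bool), a = [ffun w => sgn s * chi u w]) \/
  (exists (u v : V) (s t : bool), u != v /\ a = [ffun w => sgn s * chi u w + sgn t * chi v w]).

Definition PhiPQ (V : finType) (p q a : vec V) : Prop :=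
  inPhi a /\ norm1 (q - (p + a)) = norm1 (q - p) - norm1 a.

Definition PhiB (V : finType) (B : vec V -> Prop) (p q a : vec V) : Prop :=
  PhiPQ p q a /\ B (p + a).

Definition delta_exc (V : finType) (B : vec V -> Prop) : Prop :=
  forall p q : vec V, B p -> B q ->
  forall u : V, u \in supp (q - p) ->
  exists a : vec V, PhiB B p q a /\ u \in supp a.

From mathcomp Require Import all_boot all_order all_algebra zify.
Import GRing.Theory Num.Theory.
Local Open Scope ring_scope.
Set Implicit Arguments. Unset Strict Implicit.

(* For d in Z^V and u in supp d, dirv d u is the unit vector at u pointing in
   the direction of d.  The l1-identity defining Phi(p,q) holds coordinatewise,
   so every a in Phi(p,q) agrees in sign with q - p on its support, and hence
   equals dirv (q - p) u or dirv (q - p) u + dirv (q - p) w (PhiPQ_shape).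
   A state (u, c) with u in supp (r - q) asks for an exchange at u, from q
   towards r if c and from r towards q otherwise; Delta-EXC answers it with
   exchange vectors summing to dir (u, c) + dir (w, c) (exchange_step).  As
   dir (w, ~~ c) = - dir (w, c), this sum is the increment of the potential
   - dir along the move (u, c) |-> (w, ~~ c).  Fixing one answer per state
   gives a colour-flipping map on the finite set V * bool; it enters a cycle
   of length at least 2 (flip_cycle), which therefore visits both colours, and
   along which the collected exchange vectors sum to 0 by telescoping
   (cycle_telescope).  The vectors of colour true and false are the two
   families of the theorem (balanced_exchange). *)

Lemma iter_cycle (T : finType) (f : T -> T) (x : T) :
  exists i k, (0 < k)%N /\ iter k f (iter i f x) = iter i f x.
Proof.
have /trajectP [i lt_i_ord Ei] := looping_order f x.
exists i, (order f x - i)%N; split; first by rewrite subn_gt0.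
by rewrite -iterD subnK ?(ltnW lt_i_ord) // -Ei.
Qed.

Lemma flip_cycle (T : finType) (f : T -> T) (good : pred T) (col : T -> bool) (x : T) :
  good x -> (forall t, good t -> good (f t)) -> (forall t, col (f t) = ~~ col t) ->
  exists t k, [/\ (1 < k)%N, iter k f t = t & forall i, good (iter i f t)].
Proof.
move=> good_x good_f col_f.
have good_iter y n : good y -> good (iter n f y).
  by move=> good_y; elim: n => //= n; exact: good_f.
have [i [[|[|k]] [k_gt0 cyc]]] := iter_cycle f x => //.
- by move: cyc (col_f (iter i f x)) => /= ->; case: (col _).
- by exists (iter i f x), k.+2; split=> // n; rewrite -iterD; exact: good_iter.
Qed.

Lemma cycle_telescope (T : Type) (R : zmodType) (f : T -> T) (P : T -> R) t k :
  iter k f t = t -> \sum_(u <- mkseq (fun i => iter i f t) k) (P (f u) - P u) = 0.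
Proof.
move=> cyc; rewrite /mkseq; have -> : iota 0 k = index_iota 0 k by rewrite /index_iota subn0.
rewrite big_map.
by rewrite (telescope_sumr (fun i => P (iter i f t))) // cyc subrr.
Qed.

Lemma sum_flatten_partition (T : Type) (R : nmodType) (G : T -> seq R) (P : pred T) L :
  \sum_(x <- flatten [seq G t | t <- L & P t]) x
    + \sum_(x <- flatten [seq G t | t <- L & ~~ P t]) x
  = \sum_(t <- L) \sum_(x <- G t) x.
Proof. by rewrite !big_flatten !big_map !big_filter [RHS](bigID P). Qed.

Lemma flatten_filter_gt0 (T U : eqType) (G : T -> seq U) (P : pred T) L t :
  t \in L -> P t -> G t != [::] -> (0 < size (flatten [seq G t | t <- L & P t]))%N.
Proof.
move=> tL Pt; case Gt: (G t) => [//|x xs] _.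
have x_in : x \in flatten [seq G t | t <- L & P t].
  by apply/flatten_mapP; exists t; rewrite ?mem_filter ?Pt ?tL ?Gt ?mem_head.
by case: (flatten _) x_in.
Qed.

Section PhiShape.
Variable V : finType.
Implicit Types (p q a d : vec V) (u w z : V).

Lemma chiE u z : chi u z = (z == u)%:Z.
Proof. by rewrite /chi ffunE. Qed.

Lemma exists_supp_diff p q : p <> q -> exists u, u \in supp (q - p).
Proof.
move=> p_neq_q; apply/set0Pn/eqP => /setP supp0; apply: p_neq_q.
by apply/ffunP => z; move: (supp0 z); rewrite !inE !ffunE subr_eq0 => /negbFE/eqP.
Qed.

(* The l1-identity defining Phi(p,q) holds coordinatewise, since every
   coordinate satisfies the reverse triangle inequality. *)
Lemma PhiPQ_coord p q a :
  PhiPQ p q a -> forall z, `|(q - p) z - a z| = `|(q - p) z| - `|a z|.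
Proof.
move=> [_]; rewrite /norm1 => norm_eq z.
have slack_ge0 w : 0 <= `|(q - p) w - a w| - (`|(q - p) w| - `|a w|).
  by rewrite subr_ge0 lerB_dist.
have slack0 : \sum_w (`|(q - p) w - a w| - (`|(q - p) w| - `|a w|)) = 0.
  rewrite !sumrB -norm_eq; apply/eqP; rewrite subr_eq0.
  by apply/eqP/eq_bigr => w _; rewrite !ffunE opprD addrA.
by apply/eqP; rewrite -subr_eq0; apply/eqP/(psumr_eq0P _ slack0).
Qed.

Lemma PhiPQ_sg p q a z : PhiPQ p q a -> a z != 0 -> Num.sg (a z) = Num.sg ((q - p) z).
Proof.
move=> /PhiPQ_coord/(_ z); move: ((q - p) z) (a z) => x y Exy y_neq0.
have [y_lt0|y_gt0|] := ltrgtP y 0; last by move/eqP: y_neq0.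
- by rewrite !ltr0_sg //; lia.
- by rewrite !gtr0_sg //; lia.
Qed.

Lemma supp_PhiPQ p q a : PhiPQ p q a -> {subset supp a <= supp (q - p)}.
Proof.
move=> phi z; rewrite !inE => az_neq0.
by rewrite -sgr_eq0 -(PhiPQ_sg phi az_neq0) sgr_eq0.
Qed.

Definition dirv d u : vec V := [ffun z => Num.sg (d u) * chi u z].

Lemma dirvN d u : dirv (- d) u = - dirv d u.
Proof. by apply/ffunP => z; rewrite !ffunE sgrN mulNr. Qed.

Lemma sg_sgn b : Num.sg (sgn b) = sgn b.
Proof. by case: b. Qed.

Lemma sgn_dirv p q a u b :
  PhiPQ p q a -> a u = sgn b -> [ffun z => sgn b * chi u z] = dirv (q - p) u.
Proof.
move=> phi au; have sgn_neq0 : a u != 0 by rewrite au; case: (b).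
have := PhiPQ_sg phi sgn_neq0; rewrite au sg_sgn => ->.
by apply/ffunP => z; rewrite !ffunE.
Qed.

Lemma PhiPQ_shape p q a u : PhiPQ p q a -> u \in supp a ->
  exists2 w, w \in supp (q - p) &
    (w = u /\ a = dirv (q - p) u) \/ (w != u /\ a = dirv (q - p) u + dirv (q - p) w).
Proof.
move=> phi u_supp; have [inphi _] := phi; have := u_supp; rewrite inE => au_neq0.
case: inphi => [[u0 [b Ea]] | [u0 [v0 [b [c [u0_neq_v0 Ea]]]]]].
- have Eu : u = u0.
    by apply: contraNeq au_neq0; rewrite Ea ffunE chiE => /negbTE ->; rewrite mulr0.
  subst u0; exists u; first exact: (supp_PhiPQ phi).
  by left; rewrite Ea (sgn_dirv phi) // Ea ffunE chiE eqxx mulr1.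
- have au0 : a u0 = sgn b.
    by rewrite Ea ffunE !chiE eqxx (negbTE u0_neq_v0) mulr0 addr0 mulr1.
  have av0 : a v0 = sgn c.
    by rewrite Ea ffunE !chiE eqxx eq_sym (negbTE u0_neq_v0) mulr0 add0r mulr1.
  have supp_u0 : u0 \in supp (q - p) by apply: (supp_PhiPQ phi); rewrite inE au0; case: (b).
  have supp_v0 : v0 \in supp (q - p) by apply: (supp_PhiPQ phi); rewrite inE av0; case: (c).
  have Ea' : a = dirv (q - p) u0 + dirv (q - p) v0.
    rewrite -(sgn_dirv phi au0) -(sgn_dirv phi av0) Ea.
    by apply/ffunP => z; rewrite !ffunE.
  have [Eu|u_neq_u0] := eqVneq u u0; first by subst u; exists v0 => //; right; rewrite eq_sym.
  have [Eu|u_neq_v0] := eqVneq u v0; last first.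
    by move: au_neq0; rewrite Ea ffunE !chiE (negbTE u_neq_u0) (negbTE u_neq_v0) !mulr0 addr0 eqxx.
  by subst u; exists u0 => //; right; rewrite addrC.
Qed.

(* One exchange move: Delta-EXC at coordinate u provides exchange vectors in
   Phi_B(p, p') (one vector, counted twice when it is a single unit vector)
   whose sum is dirv (p' - p) u + dirv (p' - p) w for some w in supp (p' - p). *)
Lemma exchange_step (B : vec V -> Prop) p p' u :
  delta_exc B -> B p -> B p' -> u \in supp (p' - p) ->
  exists w (al : seq (vec V)),
    [/\ w \in supp (p' - p), al != [::], {in al, forall a, PhiB B p p' a}
      & \sum_(a <- al) a = dirv (p' - p) u + dirv (p' - p) w].
Proof.
move=> hd hp hp' u_supp; have [a [phiB u_supp_a]] := hd p p' hp hp' u u_supp.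
have [w w_supp shape] := PhiPQ_shape phiB.1 u_supp_a.
exists w, (nseq (if w == u then 2 else 1) a); split=> //.
- by case: ifP.
- by move=> b; rewrite mem_nseq => /andP[_ /eqP ->].
- rewrite big_nseq; case: shape => [[-> ->]|[/negbTE -> ->]] /=.
    by rewrite eqxx /= addr0.
  by rewrite addr0.
Qed.

End PhiShape.

Section ExchangeWalk.
Variables (V : finType) (B : vec V -> Prop) (q r : vec V).
Hypotheses (hd : delta_exc B) (hq : B q) (hr : B r).

(* A state (u, c) asks to move coordinate u from q towards r if c, and from
   r towards q otherwise; src/dst are the corresponding endpoints and dir is
   the unit step at u in the requested direction. *)
Definition src (c : bool) : vec V := if c then q else r.
Definition dst (c : bool) : vec V := if c then r else q.
Definition dir (s : V * bool) : vec V := dirv (dst s.2 - src s.2) s.1.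

Lemma dir_flip u c : dir (u, ~~ c) = - dir (u, c).
Proof. by case: c; rewrite /dir /= -dirvN opprB. Qed.

Lemma supp_dst_src c : supp (dst c - src c) = supp (r - q).
Proof. by case: c => //; apply/setP => z; rewrite !inE !ffunE -opprB oppr_eq0. Qed.

Lemma exchange_strategy :
  exists (next : V * bool -> V) (steps : V * bool -> seq (vec V)),
  forall s, s.1 \in supp (r - q) ->
    [/\ next s \in supp (r - q), steps s != [::],
        {in steps s, forall a, PhiB B (src s.2) (dst s.2) a}
      & \sum_(a <- steps s) a = dir s + dir (next s, s.2)].
Proof.
have move_exists (s : V * bool) : exists ws : V * seq (vec V), s.1 \in supp (r - q) ->
    [/\ ws.1 \in supp (r - q), ws.2 != [::],
        {in ws.2, forall a, PhiB B (src s.2) (dst s.2) a}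
      & \sum_(a <- ws.2) a = dir s + dir (ws.1, s.2)].
  case: s => u c /=; have [u_supp|] := boolP (u \in supp (r - q)); last by exists (u, [::]).
  have hsrc : B (src c) by case: (c).
  have hdst : B (dst c) by case: (c).
  rewrite -(supp_dst_src c) in u_supp *.
  by have [w [al step]] := exchange_step hd hsrc hdst u_supp; exists (w, al).
have [choice choiceP] := fin_all_exists move_exists.
by exists (fun s => (choice s).1), (fun s => (choice s).2).
Qed.

Variables (next : V * bool -> V) (steps : V * bool -> seq (vec V)).
Hypothesis steps_spec : forall s, s.1 \in supp (r - q) ->
    [/\ next s \in supp (r - q), steps s != [::],
        {in steps s, forall a, PhiB B (src s.2) (dst s.2) a}
      & \sum_(a <- steps s) a = dir s + dir (next s, s.2)].

Lemma balanced_exchange u0 : u0 \in supp (r - q) ->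
  exists (al be : seq (vec V)),
    (0 < size al)%N /\ (0 < size be)%N /\
    (forall a, a \in al -> PhiB B q r a) /\
    (forall b, b \in be -> PhiB B r q b) /\
    \sum_(a <- al) a + \sum_(b <- be) b = 0.
Proof.
move=> u0_supp; pose walk s := (next s, ~~ s.2).
have next_good s : s.1 \in supp (r - q) -> next s \in supp (r - q) by case/steps_spec.
have [s [k [k_gt1 cyc good]]] := @flip_cycle _ walk (fun s => s.1 \in supp (r - q)) snd
  (u0, true) u0_supp next_good (fun s => erefl).
pose L := mkseq (fun i => iter i walk s) k.
have L_good t : t \in L -> t.1 \in supp (r - q) by move=> /mapP[i _ ->]; exact: good.
have inL i : (i < k)%N -> iter i walk s \in L by move=> lt_ik; apply: map_f; rewrite mem_iota.
have colours c : exists2 t, t \in L & t.2 = c.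
  have [<-|s2_neq_c] := eqVneq s.2 c; first by exists s; rewrite // (inL 0%N) // ltnW.
  by exists (walk s); [exact: (inL 1%N) | rewrite /=; case: (s.2) (c) s2_neq_c => -[]].
have steps_ok t : t \in L -> {in steps t, forall a, PhiB B (src t.2) (dst t.2) a}.
  by move=> /L_good/steps_spec[].
have step_sum t : t \in L -> \sum_(a <- steps t) a = - dir (walk t) - - dir t.
  by move=> /L_good/steps_spec[_ _ _ ->]; rewrite dir_flip !opprK addrC.
exists (flatten [seq steps t | t <- L & t.2]), (flatten [seq steps t | t <- L & ~~ t.2]).
have [[t tL t2] [t' t'L t'2]] := (colours true, colours false).
split; first by apply: (flatten_filter_gt0 tL); rewrite ?t2 //; case: (steps_spec (L_good t tL)).
split.
  by apply: (flatten_filter_gt0 t'L); rewrite ?t'2 //; case: (steps_spec (L_good t' t'L)).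
split.
  by move=> a /flatten_mapP[v]; rewrite mem_filter => /andP[v2 /steps_ok]; rewrite v2; apply.
split.
  move=> b /flatten_mapP[v]; rewrite mem_filter => /andP[v2 /steps_ok].
  by rewrite (negbTE v2); apply.
by rewrite sum_flatten_partition (eq_big_seq _ step_sum) cycle_telescope.
Qed.

End ExchangeWalk.

Theorem mainTheorem2 (V : finType) (B : vec V -> Prop) :
  (0 < #|V|)%N ->
  (exists p, B p) ->
  delta_exc B ->
  forall q r : vec V, B q -> B r -> q <> r ->
  exists (al be : seq (vec V)),
    (0 < size al)%N /\ (0 < size be)%N /\
    (forall a, a \in al -> PhiB B q r a) /\
    (forall b, b \in be -> PhiB B r q b) /\
    \sum_(a <- al) a + \sum_(b <- be) b = 0.
Proof.
move=> _ _ hd q r hq hr q_neq_r.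
have [u0 u0_supp] := exists_supp_diff q_neq_r.
have [next [steps steps_spec]] := exchange_strategy hd hq hr.
have balanced_families := balanced_exchange steps_spec u0_supp.
exact: balanced_families.
Qed.
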